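(* Let $\sigma\ge0$, $\gamma>0$, $V=\sqrt{1+\sigma}$, let $(n^\varepsilon,u^\varepsilon,\phi^\varepsilon)$ be the solitary wave solution and $\phi_R^\varepsilon=\phi^\varepsilon-\varepsilon n_{\mathrm{KdV}}$. There is $\varepsilon_1>0$ such that for every fixed $\xi_*>0$ there exists a constant $C_{\xi_*}>0$ (independent of $\varepsilon$, depending on $\xi_*$) with \[ \sup_{\xi\in[0,\xi_*]}\big(|(\phi_R^\varepsilon)'(\xi)|^2+|\phi_R^\varepsilon(\xi)|^2\big)\le C_{\xi_*}\varepsilon^4\qquad\text{for all }0<\varepsilon<\varepsilon_1. \]
   Context: For $\varepsilon>0$, consider the system in $\xi\in\mathbb{R}$: $-(V+\gamma\varepsilon)n'+(nu)'=0$, $-(V+\gamma\varepsilon)u'+uu'+\sigma n'/n=-\phi'$, $\varepsilon\phi''=e^\phi-n$, with $n\to1,u\to0,\phi\to0$ as $|\xi|\to\infty$. With $V=\sqrt{1+\sigma}$, for all sufficiently small $\varepsilon>0$ it has a non-trivial smooth solution unique up to translation; the ''solitary wave solution'' $(n^\varepsilon,u^\varepsilon,\phi^\varepsilon)$ is the translate that is even in $\xi$ and has all components strictly decreasing on $(0,\infty)$. Here $n_{\mathrm{KdV}}(\xi)=\frac{3\gamma}{V}\operatorname{sech}^2(\sqrt{V\gamma/2}\,\xi)$. *)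

From Stdlib Require Import Reals.
From Coquelicot Require Import Coquelicot.
Open Scope R_scope.

Definition smooth (f : R -> R) : Prop := forall (k : nat) (x : R), ex_derive_n f k x.

Definition even_fun (f : R -> R) : Prop := forall x, f (- x) = f x.

Definition strict_decr_pos (f : R -> R) : Prop :=
  forall a b, 0 < a -> a < b -> f b < f a.

Definition tends_at_infty (f : R -> R) (l : R) : Prop :=
  is_lim f p_infty l /\ is_lim f m_infty l.

Definition Vspeed (sigma : R) : R := sqrt (1 + sigma).

Definition solves_system (sigma gamma eps : R) (n u phi : R -> R) : Prop :=
  let c := Vspeed sigma + gamma * eps in
  forall xi,
    - c * Derive n xi + Derive (fun x => n x * u x) xi = 0 /\
    - c * Derive u xi + u xi * Derive u xi + sigma * Derive n xi / n xi
      = - Derive phi xi /\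
    eps * Derive_n phi 2 xi = exp (phi xi) - n xi.

(* The solitary wave solution: smooth, nontrivial solution with the far-field
   conditions, the translate that is even with all components strictly
   decreasing on (0, oo). *)
Definition solitary_wave (sigma gamma eps : R) (n u phi : R -> R) : Prop :=
  smooth n /\ smooth u /\ smooth phi /\
  solves_system sigma gamma eps n u phi /\
  tends_at_infty n 1 /\ tends_at_infty u 0 /\ tends_at_infty phi 0 /\
  ~ (forall x, n x = 1 /\ u x = 0 /\ phi x = 0) /\
  even_fun n /\ even_fun u /\ even_fun phi /\
  strict_decr_pos n /\ strict_decr_pos u /\ strict_decr_pos phi.

Definition sech (x : R) : R := / cosh x.

Definition n_KdV (sigma gamma : R) (xi : R) : R :=
  3 * gamma / Vspeed sigma
  * (sech (sqrt (Vspeed sigma * gamma / 2) * xi)) ^ 2.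

From Stdlib Require Import Reals Lra ClassicalEpsilon.
From Coquelicot Require Import Coquelicot.
Open Scope R_scope.

(* Write [m = n - 1] and [c^2 = (V + gamma eps)^2 = 1 + sigma + d] with [d ~ 2 V gamma eps].
   The three first integrals of the system give [phi = Phi (c^2) m] and
   [eps phi'^2 / 2 = G (c^2) m] for explicit functions [Phi], [G] of [m].  The amplitude
   [m0 = n(0) - 1] is the first positive zero of [G], and the Taylor expansion
   [G m = m^2 (d (1 + d) / 2 - (1 + sigma) m / 3) + O(d m^3 + m^4)] forces
   [m0 = 3 gamma eps / V + O(eps^2)], so [phi(0) / eps = n_KdV(0) + O(eps)].  Expanding
   [exp phi] in the Poisson equation shows that [psi = phi / eps] solves the soliton equation
   [psi'' = 2 V gamma psi - V^2 psi^2] of [n_KdV] up to [O(eps)].  Both profiles are even,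
   so [W = psi - n_KdV] has [W'(0) = 0] and [W(0) = O(eps)], and a Gronwall estimate for
   [W^2 + W'^2] bounds it by [C eps^2] on [[0, xi*]]; [phi_R = eps W] gives the claim. *)

Lemma mean_value (f df : R -> R) (a b : R) :
  a <= b -> (forall x, a <= x <= b -> is_derive f x (df x)) ->
  exists c, a <= c <= b /\ f b - f a = df c * (b - a).
Proof.
  intros Hab Hd.
  assert (Hab' : forall x, Rmin a b <= x <= Rmax a b -> a <= x <= b).
  { rewrite Rmin_left, Rmax_right by lra. easy. }
  destruct (MVT_gen f a b df) as [c [Hc Hfc]].
  - intros x Hx. apply Hd, Hab'. lra.
  - intros x Hx. apply continuity_pt_filterlim, (ex_derive_continuous (V := R_NormedModule)).
    exists (df x). apply Hd, Hab', Hx.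
  - exists c. split; [apply Hab'|]; assumption.
Qed.

Lemma is_derive_0_const (h : R -> R) :
  (forall x, is_derive h x 0) -> forall x y, h x = h y.
Proof.
  intros Hd.
  assert (Hle : forall x y, x <= y -> h x = h y).
  { intros x y Hxy.
    destruct (mean_value h (fun _ => 0) x y Hxy) as [c [_ Hc]]; [intros; apply Hd | lra]. }
  intros x y. destruct (Rle_lt_dec x y) as [H|H]; [auto | symmetry; apply Hle; lra].
Qed.

Lemma is_derive_0_lim_seq (h : R -> R) (t : nat -> R) (l : R) :
  (forall x, is_derive h x 0) -> is_lim_seq (fun k => h (t k)) l -> forall x, h x = l.
Proof.
  intros Hd Hl x.
  assert (Hx : is_lim_seq (fun k => h (t k)) (h x)).
  { eapply is_lim_seq_ext; [|apply is_lim_seq_const]. intros k. apply (is_derive_0_const h Hd). }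
  apply is_lim_seq_unique in Hx, Hl. rewrite Hl in Hx. now injection Hx.
Qed.

Lemma is_lim_seq_comp_p_infty (f : R -> R) (l : R) (t : nat -> R) :
  is_lim f p_infty l -> is_lim_seq t p_infty -> is_lim_seq (fun k => f (t k)) l.
Proof. intros Hf Ht. exact (filterlim_comp _ _ _ t f _ _ _ Ht Hf). Qed.

Lemma is_lim_p_infty_eps (f : R -> R) (l e : R) :
  is_lim f p_infty l -> 0 < e -> exists M, forall x, M < x -> Rabs (f x - l) < e.
Proof. intros Hf He. apply is_lim_spec in Hf. exact (Hf (mkposreal e He)). Qed.

Lemma even_Derive_0 (f : R -> R) : even_fun f -> ex_derive f 0 -> Derive f 0 = 0.
Proof.
  intros Hev Hd.
  assert (Hneg : is_derive f 0 (- Derive f 0)).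
  { apply is_derive_ext with (f := fun x => f (- x)); [intros; apply Hev|].
    replace (- Derive f 0) with ((-1) * Derive f (- 0)) by (rewrite Ropp_0; ring).
    apply (is_derive_comp f (fun x => - x)).
    - rewrite Ropp_0. now apply Derive_correct.
    - auto_derive; auto. }
  apply is_derive_unique in Hneg. lra.
Qed.

Lemma Derive_lim_seq_0 (f : R -> R) (l : R) :
  (forall x, ex_derive f x) -> is_lim f p_infty l ->
  exists t : nat -> R, is_lim_seq t p_infty /\ is_lim_seq (fun k => Derive f (t k)) 0.
Proof.
  intros Hd Hl.
  assert (Hmvt : forall k : nat, exists t, INR k <= t <= INR k + 1 /\
                   f (INR k + 1) - f (INR k) = Derive f t * (INR k + 1 - INR k)).
  { intros k. apply mean_value; [lra|]. intros y _. now apply Derive_correct. }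
  destruct (choice _ Hmvt) as [t Ht].
  assert (Hshift : is_lim_seq (fun k => INR k + 1) p_infty).
  { apply is_lim_seq_le_p_loc with (u := INR); [exists 0%nat; intros; lra | apply is_lim_seq_INR]. }
  exists t. split.
  - apply is_lim_seq_le_p_loc with (u := INR);
      [exists 0%nat; intros k _; apply Ht | apply is_lim_seq_INR].
  - apply is_lim_seq_ext with (u := fun k => f (INR k + 1) - f (INR k)).
    { intros k. destruct (Ht k) as [_ ->]. ring. }
    replace (Finite 0) with (Finite (l - l)) by (f_equal; ring).
    apply is_lim_seq_minus'; apply is_lim_seq_comp_p_infty; auto using is_lim_seq_INR.
Qed.

Lemma is_derive_div_const (f : R -> R) (c x df : R) :
  is_derive f x df -> is_derive (fun y => f y / c) x (df / c).
Proof.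
  intros H. apply is_derive_ext with (f := fun y => / c * f y); [intros; apply Rmult_comm|].
  replace (df / c) with (/ c * df) by (unfold Rdiv; ring). now apply is_derive_scal.
Qed.

Lemma smooth_ex_derive (f : R -> R) : smooth f -> forall x, ex_derive f x.
Proof. intros H x. exact (H 1%nat x). Qed.

Lemma smooth_ex_derive2 (f : R -> R) : smooth f -> forall x, ex_derive (Derive f) x.
Proof. intros H x. exact (H 2%nat x). Qed.

Lemma smooth_continuous (f : R -> R) : smooth f -> forall x, continuous f x.
Proof.
  intros H x. apply (ex_derive_continuous (V := R_NormedModule)), smooth_ex_derive, H.
Qed.

Section EvenDecreasing.
Variables (f : R -> R) (l : R).
Hypotheses (f_even : even_fun f) (f_decr : strict_decr_pos f)
  (f_cont : forall x, continuous f x) (f_lim : is_lim f p_infty l).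

Lemma even_decr_lim_le y : 0 < y -> l <= f y.
Proof.
  intros Hy. destruct (Rle_lt_dec l (f y)) as [H|H]; [exact H|].
  destruct (is_lim_p_infty_eps f l (l - f y) f_lim) as [M HM]; [lra|].
  set (x := Rmax M y + 1).
  specialize (HM x ltac:(unfold x; generalize (Rmax_l M y); lra)). apply Rabs_def2 in HM.
  specialize (f_decr y x Hy ltac:(unfold x; generalize (Rmax_r M y); lra)). lra.
Qed.

Lemma even_decr_pos_le_0 t : 0 < t -> f t <= f 0.
Proof.
  intros Ht. destruct (Rle_lt_dec (f t) (f 0)) as [H|H]; [exact H|].
  destruct (f_cont 0 (fun y => Rabs (y - f 0) < f t - f 0)) as [d HD].
  { exists (mkposreal _ (Rgt_minus _ _ H)). now intros y Hy. }
  set (x := Rmin (d / 2) (t / 2)).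
  assert (Hx : 0 < x <= d / 2 /\ x <= t / 2).
  { generalize (cond_pos d). unfold x. split; [split|];
      [apply Rmin_glb_lt | apply Rmin_l | apply Rmin_r]; lra. }
  specialize (HD x ltac:(change (Rabs (x - 0) < d); rewrite Rminus_0_r, Rabs_pos_eq; lra)).
  apply Rabs_def2 in HD.
  specialize (f_decr x t ltac:(lra) ltac:(lra)). lra.
Qed.

Lemma even_decr_le_0 x : f x <= f 0.
Proof.
  destruct (Rtotal_order x 0) as [H|[->|H]].
  - rewrite <- f_even. apply even_decr_pos_le_0. lra.
  - lra.
  - now apply even_decr_pos_le_0.
Qed.

Lemma even_decr_gt_lim x : l < f x.
Proof.
  assert (Hpos : forall y, 0 < y -> l < f y).
  { intros y Hy. generalize (even_decr_lim_le (y + 1) ltac:(lra)) (f_decr y (y + 1) Hy ltac:(lra)).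
    lra. }
  destruct (Rtotal_order x 0) as [H|[->|H]].
  - rewrite <- f_even. apply Hpos. lra.
  - generalize (Hpos 1 Rlt_0_1) (even_decr_pos_le_0 1 Rlt_0_1). lra.
  - now apply Hpos.
Qed.

End EvenDecreasing.

Lemma taylor_remainder_step (f f' : R -> R) (r K : R) (n : nat) :
  0 <= K -> f 0 = 0 ->
  (forall x, Rabs x <= r -> is_derive f x (f' x)) ->
  (forall x, Rabs x <= r -> Rabs (f' x) <= K * Rabs x ^ n) ->
  forall x, Rabs x <= r -> Rabs (f x) <= K * Rabs x ^ S n.
Proof.
  intros HK Hf0 Hd Hb x Hx.
  destruct (MVT_cor4 f f' 0 r) with (b := x) as [c [Hfc Hc]].
  - intros c Hc. rewrite Rminus_0_r in Hc. auto.
  - now rewrite Rminus_0_r.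
  - rewrite Hf0, !Rminus_0_r in Hfc. rewrite !Rminus_0_r in Hc.
    assert (Hfc' := Hb c ltac:(lra)).
    assert (Hcn : Rabs c ^ n <= Rabs x ^ n) by (apply pow_incr; split; [apply Rabs_pos | exact Hc]).
    assert (0 <= Rabs c ^ n) by (apply pow_le, Rabs_pos).
    assert (0 <= Rabs x) by apply Rabs_pos.
    rewrite Hfc, Rabs_mult. simpl.
    apply Rle_trans with (K * Rabs c ^ n * Rabs x); [now apply Rmult_le_compat_r|].
    assert (K * Rabs c ^ n <= K * Rabs x ^ n) by now apply Rmult_le_compat_l.
    nra.
Qed.

Lemma pow_remainder (r x K : R) (n : nat) :
  0 <= K -> Rabs r <= K * Rabs x ^ n -> exists eta, Rabs eta <= K /\ r = x ^ n * eta.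
Proof.
  intros HK Hr. rewrite RPow_abs in Hr.
  destruct (Req_dec (x ^ n) 0) as [Hx|Hx].
  - exists 0. rewrite Hx, Rabs_R0 in *. split; [lra|].
    rewrite Rmult_0_r in Hr. generalize (Rabs_pos r). intros. rewrite Rmult_0_l.
    now apply Rabs_eq_0, Rle_antisym.
  - exists (r / x ^ n). split; [|field; exact Hx].
    assert (0 < Rabs (x ^ n)) by now apply Rabs_pos_lt.
    rewrite Rabs_div by exact Hx. apply Rle_div_l; lra.
Qed.

Lemma exp_taylor_4 x : Rabs x <= 1 ->
  exists eta, Rabs eta <= 3 /\ exp x = 1 + x + x^2/2 + x^3/6 + x^4 * eta.
Proof.
  intros Hx.
  assert (T0 : forall y, Rabs y <= 1 -> Rabs (exp y) <= 3 * Rabs y ^ 0).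
  { intros y Hy. rewrite pow_O, Rmult_1_r, Rabs_pos_eq by (left; apply exp_pos).
    apply Rabs_le_between in Hy.
    apply Rle_trans with (exp 1); [|apply exp_le_3].
    destruct (Req_dec y 1) as [->|]; [lra | left; apply exp_increasing; lra]. }
  assert (T1 : forall y, Rabs y <= 1 -> Rabs (exp y - 1) <= 3 * Rabs y ^ 1).
  { apply (taylor_remainder_step _ exp); [lra | rewrite exp_0; ring | | exact T0].
    intros y _. auto_derive; auto; ring. }
  assert (T2 : forall y, Rabs y <= 1 -> Rabs (exp y - 1 - y) <= 3 * Rabs y ^ 2).
  { apply (taylor_remainder_step _ (fun y => exp y - 1)); [lra | rewrite exp_0; ring | | exact T1].
    intros y _. auto_derive; auto; ring. }
  assert (T3 : forall y, Rabs y <= 1 -> Rabs (exp y - 1 - y - y^2/2) <= 3 * Rabs y ^ 3).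
  { apply (taylor_remainder_step _ (fun y => exp y - 1 - y));
      [lra | rewrite exp_0; field | | exact T2].
    intros y _. auto_derive; auto; field. }
  assert (T4 : forall y, Rabs y <= 1 -> Rabs (exp y - 1 - y - y^2/2 - y^3/6) <= 3 * Rabs y ^ 4).
  { apply (taylor_remainder_step _ (fun y => exp y - 1 - y - y^2/2));
      [lra | rewrite exp_0; field | | exact T3].
    intros y _. auto_derive; auto; field. }
  destruct (pow_remainder _ x 3 4 ltac:(lra) (T4 x Hx)) as [eta [Heta He]].
  exists eta. split; [exact Heta | lra].
Qed.

Lemma ln_taylor_4 m : Rabs m <= 1/2 ->
  exists L, Rabs L <= 2 /\ ln (1 + m) = m - m^2/2 + m^3/3 + m^4 * L.
Proof.
  intros Hm.
  assert (T : forall y, Rabs y <= 1/2 -> Rabs (ln (1 + y) - y + y^2/2 - y^3/3) <= 2 * Rabs y ^ 4).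
  { apply (taylor_remainder_step _ (fun y => - y^3 / (1 + y)));
      [lra | rewrite Rplus_0_r, ln_1; field | |].
    - intros y Hy. apply Rabs_le_between in Hy. auto_derive; [lra|]. field. lra.
    - intros y Hy. apply Rabs_le_between in Hy.
      rewrite Rabs_div, Rabs_Ropp, <- RPow_abs, (Rabs_pos_eq (1 + y)) by lra.
      assert (0 <= Rabs y ^ 3) by (apply pow_le, Rabs_pos).
      apply Rle_div_l; [lra|]. simpl. nra. }
  destruct (pow_remainder _ m 2 4 ltac:(lra) (T m Hm)) as [L [HL Hl]].
  exists L. split; [exact HL | lra].
Qed.

Lemma energy_derivative_le (w w1 w2 L beta : R) :
  0 <= L -> Rabs w2 <= L * Rabs w + beta ->
  2 * w * w1 + 2 * w1 * w2 <= (2 + L) * (w ^ 2 + w1 ^ 2) + beta ^ 2.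
Proof.
  intros HL Hw2.
  assert (H12 : w1 * w2 <= Rabs w1 * (L * Rabs w + beta)).
  { apply Rle_trans with (Rabs (w1 * w2)); [apply Rle_abs|].
    rewrite Rabs_mult. apply Rmult_le_compat_l; [apply Rabs_pos | exact Hw2]. }
  assert (HLw : 2 * Rabs w1 * Rabs w * L <= L * (w ^ 2 + w1 ^ 2)).
  { rewrite <- (pow2_abs w), <- (pow2_abs w1).
    assert (0 <= L * (Rabs w1 - Rabs w) ^ 2) by (apply Rmult_le_pos; [lra | apply pow2_ge_0]).
    nra. }
  assert (Hb : 2 * Rabs w1 * beta <= w1 ^ 2 + beta ^ 2).
  { rewrite <- (pow2_abs w1). assert (0 <= (Rabs w1 - beta) ^ 2) by apply pow2_ge_0. nra. }
  assert (0 <= (w - w1) ^ 2) by apply pow2_ge_0.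
  nra.
Qed.

Lemma energy_estimate (W W1 W2 : R -> R) (L beta : R) :
  0 <= L ->
  (forall x, 0 <= x -> is_derive W x (W1 x)) ->
  (forall x, 0 <= x -> is_derive W1 x (W2 x)) ->
  (forall x, 0 <= x -> Rabs (W2 x) <= L * Rabs (W x) + beta) ->
  forall x, 0 <= x ->
    W x ^ 2 + W1 x ^ 2 <= (W 0 ^ 2 + W1 0 ^ 2 + beta ^ 2 / (2 + L)) * exp ((2 + L) * x).
Proof.
  intros HL HW HW1 HW2 x Hx.
  set (M := 2 + L).
  set (E := fun t => W t ^ 2 + W1 t ^ 2 + beta ^ 2 / M).
  set (dH := fun t => (2 * W t * W1 t + 2 * W1 t * W2 t - M * E t) * exp (- (M * t))).
  assert (HdH : forall t, 0 <= t -> is_derive (fun t => E t * exp (- (M * t))) t (dH t)).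
  { intros t Ht. unfold E, dH.
    assert (D1 := HW t Ht). assert (D2 := HW1 t Ht).
    auto_derive.
    - repeat split; [exists (W1 t) | exists (W2 t)]; assumption.
    - change (Derive (fun y => W y) t) with (Derive W t).
      change (Derive (fun y => W1 y) t) with (Derive W1 t).
      rewrite (is_derive_unique _ _ _ D1), (is_derive_unique _ _ _ D2).
      unfold E. field. unfold M. lra. }
  destruct (mean_value (fun t => E t * exp (- (M * t))) dH 0 x Hx) as [c [Hc HEc]];
    [intros t Ht; apply HdH; lra|].
  assert (dH c <= 0).
  { unfold dH, E. apply Rmult_le_0_r; [|left; apply exp_pos].
    generalize (energy_derivative_le (W c) (W1 c) (W2 c) L beta HL (HW2 c ltac:(lra))).
    replace (M * (W c ^ 2 + W1 c ^ 2 + beta ^ 2 / M)) with (M * (W c ^ 2 + W1 c ^ 2) + beta ^ 2)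
      by (field; unfold M; lra).
    fold M. lra. }
  rewrite Rmult_0_r, Ropp_0, exp_0, Rmult_1_r in HEc.
  assert (Hexp : exp (- (M * x)) * exp (M * x) = 1) by (rewrite <- exp_plus, <- exp_0; f_equal; ring).
  assert (0 < exp (M * x)) by apply exp_pos.
  replace (W x ^ 2 + W1 x ^ 2) with (E x * exp (- (M * x)) * exp (M * x) - beta ^ 2 / M)
    by (rewrite Rmult_assoc, Hexp; unfold E; ring).
  assert (0 <= beta ^ 2 / M) by (apply Rdiv_le_0_compat; [apply pow2_ge_0 | unfold M; lra]).
  apply Rle_trans with (E x * exp (- (M * x)) * exp (M * x)); [lra|].
  apply Rmult_le_compat_r; [lra|]. unfold E in *. nra.
Qed.

Lemma KdV_comparison (a b P beta : R) (psi psi1 psi2 n n1 : R -> R) :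
  0 <= a -> 0 <= b ->
  (forall x, is_derive psi x (psi1 x)) -> (forall x, is_derive psi1 x (psi2 x)) ->
  (forall x, is_derive n x (n1 x)) -> (forall x, is_derive n1 x (a * n x - b * n x ^ 2)) ->
  (forall x, Rabs (psi2 x - (a * psi x - b * psi x ^ 2)) <= beta) ->
  (forall x, Rabs (psi x) <= P) -> (forall x, Rabs (n x) <= P) ->
  let M := 2 + (a + 2 * b * P) in
  forall x, 0 <= x ->
  (psi x - n x) ^ 2 + (psi1 x - n1 x) ^ 2
    <= ((psi 0 - n 0) ^ 2 + (psi1 0 - n1 0) ^ 2 + beta ^ 2 / M) * exp (M * x).
Proof.
  intros Ha Hb Hpsi Hpsi1 Hn Hn1 Hr HpsiP HnP M.
  assert (HP : 0 <= P) by (apply Rle_trans with (Rabs (n 0)); [apply Rabs_pos | apply HnP]).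
  apply (energy_estimate (fun x => psi x - n x) (fun x => psi1 x - n1 x)
           (fun x => psi2 x - (a * n x - b * n x ^ 2))).
  - apply Rplus_le_le_0_compat; [lra|]. repeat apply Rmult_le_pos; lra.
  - intros x _. exact (is_derive_minus _ _ x _ _ (Hpsi x) (Hn x)).
  - intros x _. exact (is_derive_minus _ _ x _ _ (Hpsi1 x) (Hn1 x)).
  - intros x _.
    replace (psi2 x - (a * n x - b * n x ^ 2))
      with ((a - b * (psi x + n x)) * (psi x - n x) + (psi2 x - (a * psi x - b * psi x ^ 2)))
      by ring.
    eapply Rle_trans; [apply Rabs_triang|]. rewrite Rabs_mult.
    apply Rplus_le_compat; [|apply Hr]. apply Rmult_le_compat_r; [apply Rabs_pos|].
    eapply Rle_trans; [apply Rabs_triang|].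
    rewrite Rabs_Ropp, (Rabs_pos_eq a), Rabs_mult, (Rabs_pos_eq b) by lra.
    assert (Rabs (psi x + n x) <= 2 * P)
      by (eapply Rle_trans; [apply Rabs_triang | generalize (HpsiP x) (HnP x); lra]).
    assert (b * Rabs (psi x + n x) <= b * (2 * P)) by (apply Rmult_le_compat_l; lra).
    lra.
Qed.

Lemma Rabs_add_le a b A B : Rabs a <= A -> Rabs b <= B -> Rabs (a + b) <= A + B.
Proof. intros. eapply Rle_trans; [apply Rabs_triang | lra]. Qed.

Lemma Rabs_sub_le a b A B : Rabs a <= A -> Rabs b <= B -> Rabs (a - b) <= A + B.
Proof. intros. eapply Rle_trans; [apply Rabs_triang | rewrite Rabs_Ropp; lra]. Qed.

Lemma Rabs_mul_le a b A B : Rabs a <= A -> Rabs b <= B -> Rabs (a * b) <= A * B.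
Proof. intros. rewrite Rabs_mult. apply Rmult_le_compat; auto; apply Rabs_pos. Qed.

Lemma Rabs_opp_le a A : Rabs a <= A -> Rabs (- a) <= A.
Proof. now rewrite Rabs_Ropp. Qed.

Lemma Rabs_pow_le a A n : Rabs a <= A -> Rabs (a ^ n) <= A ^ n.
Proof. intros. rewrite <- RPow_abs. apply pow_incr. split; [apply Rabs_pos | assumption]. Qed.

Lemma Rabs_div_le a b A : Rabs a <= A -> Rabs (a / b) <= A * Rabs (/ b).
Proof. intros. apply Rabs_mul_le; [assumption | apply Rle_refl]. Qed.

Lemma Rabs_scaled_le x a B : 0 <= x -> Rabs a <= B -> Rabs (x * a) <= B * x.
Proof.
  intros Hx Ha. rewrite Rabs_mult, Rabs_pos_eq, Rmult_comm by exact Hx.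
  now apply Rmult_le_compat_r.
Qed.

(* [bound_abs] proves [Rabs e <= B] where [B] mirrors [e] with [+], [-] turned into [+]
   and each leaf [x] replaced by the bound of a hypothesis [Rabs x <= _] (or by [Rabs x]). *)
Ltac abs_bound_of e :=
  match e with
  | ?a + ?b => let A := abs_bound_of a in let B := abs_bound_of b in constr:(A + B)
  | ?a - ?b => let A := abs_bound_of a in let B := abs_bound_of b in constr:(A + B)
  | ?a * ?b => let A := abs_bound_of a in let B := abs_bound_of b in constr:(A * B)
  | - ?a => abs_bound_of a
  | ?a / ?b => let A := abs_bound_of a in constr:(A * Rabs (/ b))
  | ?a ^ ?n => let A := abs_bound_of a in constr:(A ^ n)
  | _ => match goal with
         | H : Rabs e <= ?B |- _ => constr:(B)
         | _ => constr:(Rabs e)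
         end
  end.

Ltac prove_abs_bound := first
  [ assumption
  | apply Rle_refl
  | apply Rabs_add_le; [prove_abs_bound | prove_abs_bound]
  | apply Rabs_sub_le; [prove_abs_bound | prove_abs_bound]
  | apply Rabs_mul_le; [prove_abs_bound | prove_abs_bound]
  | apply Rabs_opp_le; prove_abs_bound
  | apply Rabs_div_le; prove_abs_bound
  | apply Rabs_pow_le; prove_abs_bound ].

Ltac bound_abs := match goal with
  | |- Rabs ?e <= _ => let B := abs_bound_of e in
                       apply Rle_trans with B; [prove_abs_bound | apply Rle_refl]
  end.

Ltac nonneg := repeat (apply Rplus_le_le_0_compat || apply Rmult_le_pos || apply pow_le
  || apply Rabs_pos); try lra.

Section PhiExpansion.
Variable s : R.

Definition Phi (c2 m : R) : R :=
  c2 * (m / (1 + m)) - c2 * (m / (1 + m)) ^ 2 / 2 - s * ln (1 + m).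

Definition G (c2 m : R) : R := exp (Phi c2 m) - 1 - c2 * (m / (1 + m)) + s * m.

(* Below, [L] and [eta] are the fourth-order Taylor remainders of [ln (1 + m)] and [exp]
   (as in [ln_taylor_4], [exp_taylor_4]); the remainders are polynomials in [s], [d], [m],
   [/ (1 + m)], [L] and [eta], hence bounded uniformly for small [d] and [m]. *)
Definition quad_coef (d : R) : R := (3 * (1 + s + d) - s) / 2.

Definition cubic_rem (d m L : R) : R :=
  2 * (1 + s + d) * / (1 + m) - (1 + s + d) * m * (/ (1 + m)) ^ 2 / 2 - s / 3 - s * m * L.

Definition lin_rem (d m L : R) : R := quad_coef d - m * cubic_rem d m L.

Definition Phi_quot (d m L : R) : R := 1 + d - m * lin_rem d m L.

Definition G_rem (d m L eta : R) : R :=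
  let f := Phi_quot d m L in let g := lin_rem d m L in
  - (1 + s + d) * / (1 + m) + (1 + d) * cubic_rem d m L + g ^ 2 / 2
  - (1 + s + d) * (/ (1 + m)) ^ 2 / 2 - g * (f ^ 2 + f * (1 + d) + (1 + d) ^ 2) / 6
  - s * L + f ^ 4 * eta.

Definition exp_Phi_rem (d m L eta : R) : R :=
  let f := Phi_quot d m L in
  - (3 / 2 + s) * lin_rem d m L * (f + 1 + d) + (1 - d) * cubic_rem d m L
  + f ^ 3 / 6 + m * f ^ 4 * eta.

Definition is_ln_remainder (m L : R) : Prop := ln (1 + m) = m - m^2/2 + m^3/3 + m^4 * L.

Lemma Phi_eq_quot d m L : 0 <= m -> is_ln_remainder m L -> Phi (1 + s + d) m = m * Phi_quot d m L.
Proof.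
  intros Hm HL. unfold Phi. rewrite HL.
  unfold Phi_quot, lin_rem, cubic_rem, quad_coef. field. lra.
Qed.

Lemma G_eq_expansion d m L eta : 0 <= m -> is_ln_remainder m L ->
  let P := m * Phi_quot d m L in
  exp P = 1 + P + P^2/2 + P^3/6 + P^4 * eta ->
  G (1 + s + d) m = m^2 * (d * (1 + d) / 2 - (1 + s) * m / 3)
    + d * m^3 * (- 3/2 - s - d + d^2/6) + m^4 * G_rem d m L eta.
Proof.
  intros Hm HL P Hexp. unfold G. rewrite (Phi_eq_quot d m L Hm HL). fold P. rewrite Hexp.
  unfold P, G_rem, Phi_quot, lin_rem, cubic_rem, quad_coef. field. lra.
Qed.

Lemma exp_Phi_eq_expansion d m L eta : 0 <= m -> is_ln_remainder m L ->
  let P := m * Phi_quot d m L in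
  exp P = 1 + P + P^2/2 + P^3/6 + P^4 * eta ->
  exp (Phi (1 + s + d) m) - 1 - m - d * Phi (1 + s + d) m + (1 + s) * Phi (1 + s + d) m ^ 2
  = - d^2 * m + d * m^2 * (3 + 3 * s + 3 * d + s * d) + m^3 * exp_Phi_rem d m L eta.
Proof.
  intros Hm HL P Hexp. rewrite (Phi_eq_quot d m L Hm HL). fold P. rewrite Hexp.
  unfold P, exp_Phi_rem, Phi_quot, lin_rem, quad_coef. field.
Qed.

Lemma expansion_leaf_bounds d m : 0 <= d <= 1 -> 0 <= m <= 1/2 ->
  Rabs d <= 1 /\ Rabs m <= 1 /\ Rabs (/ (1 + m)) <= 1.
Proof.
  intros Hd Hm. rewrite !Rabs_pos_eq by (try apply Rlt_le, Rinv_0_lt_compat; lra).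
  repeat split; try lra. rewrite <- Rinv_1. apply Rinv_le_contravar; lra.
Qed.

Local Ltac remainder_bound :=
  intros d m L eta Hd Hm HL Heta; destruct (expansion_leaf_bounds d m Hd Hm) as (? & ? & ?);
  unfold G_rem, exp_Phi_rem, Phi_quot, lin_rem, cubic_rem, quad_coef; cbv zeta; bound_abs.

Local Notation uniformly_bounded P B := (forall d m L eta, 0 <= d <= 1 -> 0 <= m <= 1/2 ->
  Rabs L <= 2 -> Rabs eta <= 3 -> Rabs (P d m L eta) <= B).

Lemma expansion_remainders_bounded : exists B, 1 <= B /\
  forall d m L eta, 0 <= d <= 1 -> 0 <= m <= 1/2 -> Rabs L <= 2 -> Rabs eta <= 3 ->
    Rabs (Phi_quot d m L) <= B /\ Rabs (lin_rem d m L) <= B /\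
    Rabs (- 3/2 - s - d + d^2/6) <= B /\ Rabs (G_rem d m L eta) <= B /\
    Rabs (3 + 3 * s + 3 * d + s * d) <= B /\ Rabs (exp_Phi_rem d m L eta) <= B.
Proof.
  assert (exists B, uniformly_bounded (fun d m L _ => Phi_quot d m L) B) as [B1 H1]
    by (eexists; remainder_bound).
  assert (exists B, uniformly_bounded (fun d m L _ => lin_rem d m L) B) as [B2 H2]
    by (eexists; remainder_bound).
  assert (exists B, uniformly_bounded (fun d _ _ _ => - 3/2 - s - d + d^2/6) B) as [B3 H3]
    by (eexists; remainder_bound).
  assert (exists B, uniformly_bounded G_rem B) as [B4 H4]
    by (eexists; remainder_bound).
  assert (exists B, uniformly_bounded (fun d _ _ _ => 3 + 3 * s + 3 * d + s * d) B) as [B5 H5]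
    by (eexists; remainder_bound).
  assert (exists B, uniformly_bounded exp_Phi_rem B) as [B6 H6]
    by (eexists; remainder_bound).
  exists (1 + Rabs B1 + Rabs B2 + Rabs B3 + Rabs B4 + Rabs B5 + Rabs B6).
  assert (Hpos := conj (Rabs_pos B1) (conj (Rabs_pos B2) (conj (Rabs_pos B3)
    (conj (Rabs_pos B4) (conj (Rabs_pos B5) (Rabs_pos B6)))))).
  split; [lra|]. intros d m L eta Hd Hm HL Heta.
  specialize (H1 d m L eta Hd Hm HL Heta). specialize (H2 d m L eta Hd Hm HL Heta).
  specialize (H3 d m L eta Hd Hm HL Heta). specialize (H4 d m L eta Hd Hm HL Heta).
  specialize (H5 d m L eta Hd Hm HL Heta). specialize (H6 d m L eta Hd Hm HL Heta).
  cbv beta in *. generalize (Rle_abs B1) (Rle_abs B2) (Rle_abs B3) (Rle_abs B4) (Rle_abs B5) (Rle_abs B6).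
  repeat split; lra.
Qed.

Definition expansion_bounds (mA C : R) : Prop :=
  forall d m, 0 <= d <= 1 -> 0 <= m <= mA ->
    Rabs (G (1 + s + d) m - m^2 * (d * (1 + d) / 2 - (1 + s) * m / 3)) <= C * (d * m^3 + m^4) /\
    Rabs (exp (Phi (1 + s + d) m) - 1 - m - d * Phi (1 + s + d) m + (1 + s) * Phi (1 + s + d) m ^ 2)
      <= C * (m^3 + d * m^2 + d^2 * m) /\
    Rabs (Phi (1 + s + d) m - m) <= C * (m * d + m^2) /\
    Rabs (Phi (1 + s + d) m) <= C * m.

Lemma Phi_G_expansions : exists mA C, 0 < mA <= 1/2 /\ 1 <= C /\ expansion_bounds mA C.
Proof.
  destruct expansion_remainders_bounded as [B [HB1 HB]].
  exists (Rmin (1/2) (1 / (B + 1))), B.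
  assert (HmA := Rmin_r (1/2) (1 / (B + 1))).
  split; [split; [apply Rmin_glb_lt; [lra | apply Rdiv_lt_0_compat; lra] | apply Rmin_l] | split; [lra|]].
  intros d m Hd Hm.
  assert (Hm2 : 0 <= m <= 1/2) by (generalize (Rmin_l (1/2) (1 / (B + 1))); lra).
  destruct (ln_taylor_4 m) as [L [HL HLe]]; [rewrite Rabs_pos_eq; lra|].
  assert (HPhi := Phi_eq_quot d m L (proj1 Hm) HLe).
  assert (Hf : Rabs (Phi_quot d m L) <= B) by (apply (HB d m L 0); auto; rewrite Rabs_R0; lra).
  assert (HP1 : Rabs (m * Phi_quot d m L) <= 1).
  { apply Rle_trans with (B * m); [now apply Rabs_scaled_le|].
    assert (m * (B + 1) <= 1).
    { apply Rle_trans with (1 / (B + 1) * (B + 1)); [apply Rmult_le_compat_r; lra | right; field; lra]. }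
    nra. }
  destruct (exp_taylor_4 _ HP1) as [eta [Heta Hexp]].
  destruct (HB d m L eta Hd Hm2 HL Heta) as (_ & Hg & HA1 & HGr & HB2 & HEr).
  assert (Hone : Rabs (-1) <= B) by (rewrite Rabs_left; lra).
  repeat split.
  - rewrite (G_eq_expansion d m L eta (proj1 Hm) HLe Hexp).
    replace (_ - _) with (d * m^3 * (- 3/2 - s - d + d^2/6) + m^4 * G_rem d m L eta) by ring.
    eapply Rle_trans; [apply Rabs_add_le; apply (Rabs_scaled_le _ _ B); auto; nonneg|].
    apply Req_le. ring.
  - rewrite (exp_Phi_eq_expansion d m L eta (proj1 Hm) HLe Hexp).
    replace (- d^2 * m) with (d^2 * m * (-1)) by ring.
    eapply Rle_trans;
      [apply Rabs_add_le; [apply Rabs_add_le|]; apply (Rabs_scaled_le _ _ B); auto; nonneg|].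
    apply Req_le. ring.
  - rewrite HPhi. unfold Phi_quot.
    replace (_ - m) with (m * d * 1 + m^2 * (- lin_rem d m L)) by ring.
    eapply Rle_trans; [apply Rabs_add_le; apply (Rabs_scaled_le _ _ B);
      [nonneg | rewrite Rabs_R1; lra | nonneg | now rewrite Rabs_Ropp] |].
    apply Req_le. ring.
  - rewrite HPhi. now apply (Rabs_scaled_le _ _ B).
Qed.

End PhiExpansion.

Section FirstIntegrals.
Variables (sigma gamma eps : R) (N U F : R -> R).
Hypothesis eps_pos : 0 < eps.
Hypothesis wave : solitary_wave sigma gamma eps N U F.

Let c := Vspeed sigma + gamma * eps.

Let N_smooth : smooth N. Proof. apply wave. Qed.
Let U_smooth : smooth U. Proof. apply wave. Qed.
Let F_smooth : smooth F. Proof. apply wave. Qed.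
Let system : solves_system sigma gamma eps N U F. Proof. apply wave. Qed.
Let N_lim : is_lim N p_infty 1. Proof. apply wave. Qed.
Let U_lim : is_lim U p_infty 0. Proof. apply wave. Qed.
Let F_lim : is_lim F p_infty 0. Proof. apply wave. Qed.
Let N_even : even_fun N. Proof. apply wave. Qed.
Let N_decr : strict_decr_pos N. Proof. apply wave. Qed.
Let F_even : even_fun F. Proof. apply wave. Qed.

Let lim_INR f (l : R) : is_lim f p_infty l -> is_lim_seq (fun k => f (INR k)) l.
Proof. intros Hf. exact (is_lim_seq_comp_p_infty f l INR Hf is_lim_seq_INR). Qed.

Lemma N_gt_1 x : 1 < N x.
Proof. exact (even_decr_gt_lim N 1 N_even N_decr (smooth_continuous N N_smooth) N_lim x). Qed.

Lemma N_le_N0 x : N x <= N 0.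
Proof. exact (even_decr_le_0 N N_even N_decr (smooth_continuous N N_smooth) x). Qed.

(* [auto_derive] reports derivatives as [Derive (fun y => f y) x]. *)
Ltac Derive_eta := repeat match goal with
  | |- context [Derive (fun y => ?f y) ?x] => progress change (Derive (fun y => f y) x) with (Derive f x)
  end.

Lemma mass_integral x : N x * (c - U x) = c.
Proof.
  apply (is_derive_0_lim_seq (fun x => N x * (c - U x)) INR).
  - intros y. destruct (system y) as [E1 _].
    assert (dN := smooth_ex_derive N N_smooth y). assert (dU := smooth_ex_derive U U_smooth y).
    rewrite Derive_mult in E1 by auto. fold c in E1.
    auto_derive; [tauto|]. Derive_eta. lra.
  - replace (Finite c) with (Finite (1 * (c - 0))) by (f_equal; ring).
    apply is_lim_seq_mult'; [now apply lim_INR|].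
    apply is_lim_seq_minus'; [apply is_lim_seq_const | now apply lim_INR].
Qed.

Lemma momentum_integral x : F x - c * U x + U x ^ 2 / 2 + sigma * ln (N x) = 0.
Proof.
  apply (is_derive_0_lim_seq (fun x => F x - c * U x + U x ^ 2 / 2 + sigma * ln (N x)) INR).
  - intros y. destruct (system y) as [_ [E2 _]].
    assert (dN := smooth_ex_derive N N_smooth y). assert (dU := smooth_ex_derive U U_smooth y).
    assert (dF := smooth_ex_derive F F_smooth y). assert (Hy := N_gt_1 y). fold c in E2.
    auto_derive; [repeat split; auto; lra|]. Derive_eta. unfold Rdiv in E2. lra.
  - assert (LU := lim_INR U 0 U_lim).
    apply is_lim_seq_ext
      with (u := fun k => F (INR k) - c * U (INR k) + U (INR k) * U (INR k) / 2 + sigma * ln (N (INR k))).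
    { intros k. cbv beta. field. }
    replace (Finite 0) with (Finite (0 - c * 0 + 0 * 0 / 2 + sigma * ln 1))
      by (rewrite ln_1; f_equal; field).
    apply is_lim_seq_plus'; [apply is_lim_seq_plus'; [apply is_lim_seq_minus'|]|].
    + now apply lim_INR.
    + apply is_lim_seq_mult'; [apply is_lim_seq_const | exact LU].
    + apply is_lim_seq_div'; [now apply is_lim_seq_mult' | apply is_lim_seq_const | lra].
    + apply is_lim_seq_mult'; [apply is_lim_seq_const|].
      apply is_lim_seq_continuous; [|now apply lim_INR].
      apply continuity_pt_filterlim, continuous_ln. lra.
Qed.

Lemma energy_integral x :
  eps * Derive F x ^ 2 / 2 = exp (F x) - 1 - c * U x + sigma * (N x - 1).
Proof.
  enough (H : eps * Derive F x ^ 2 / 2 - exp (F x) + c * U x - sigma * N x = - 1 - sigma) by lra.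
  destruct (Derive_lim_seq_0 F 0 (smooth_ex_derive F F_smooth) F_lim) as [t [Ht HdF]].
  apply (is_derive_0_lim_seq
           (fun x => eps * Derive F x ^ 2 / 2 - exp (F x) + c * U x - sigma * N x) t).
  - intros y. destruct (system y) as [_ [E2 E3]]. fold c in E2.
    change (Derive_n F 2 y) with (Derive (Derive F) y) in E3.
    assert (dN := smooth_ex_derive N N_smooth y). assert (dU := smooth_ex_derive U U_smooth y).
    assert (dF := smooth_ex_derive F F_smooth y). assert (dF2 := smooth_ex_derive2 F F_smooth y).
    assert (Hy := N_gt_1 y).
    assert (HNF : N y * Derive F y = N y * (c - U y) * Derive U y - sigma * Derive N y).
    { replace (Derive F y) with (c * Derive U y - U y * Derive U y - sigma * Derive N y / N y) by lra.
      field. lra. }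
    rewrite mass_integral in HNF.
    auto_derive; [repeat split; auto|]. Derive_eta.
    transitivity (Derive F y * (eps * Derive (Derive F) y - (exp (F y) - N y))
                  - (N y * Derive F y - (c * Derive U y - sigma * Derive N y))); [field|].
    rewrite HNF, E3. ring.
  - assert (LF := is_lim_seq_comp_p_infty F 0 t F_lim Ht).
    assert (LU := is_lim_seq_comp_p_infty U 0 t U_lim Ht).
    assert (LN := is_lim_seq_comp_p_infty N 1 t N_lim Ht).
    apply is_lim_seq_ext with (u := fun k => eps * (Derive F (t k) * Derive F (t k)) / 2
                                      - exp (F (t k)) + c * U (t k) - sigma * N (t k)).
    { intros k. cbv beta. field. }
    replace (Finite (- 1 - sigma)) with (Finite (eps * (0 * 0) / 2 - exp 0 + c * 0 - sigma * 1))
      by (rewrite exp_0; f_equal; field).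
    apply is_lim_seq_minus'; [apply is_lim_seq_plus'; [apply is_lim_seq_minus'|]|].
    + apply is_lim_seq_div'; [|apply is_lim_seq_const | lra].
      apply is_lim_seq_mult'; [apply is_lim_seq_const | now apply is_lim_seq_mult'].
    + apply is_lim_seq_continuous; [apply continuity_pt_filterlim, continuous_exp | exact LF].
    + apply is_lim_seq_mult'; [apply is_lim_seq_const | exact LU].
    + apply is_lim_seq_mult'; [apply is_lim_seq_const | exact LN].
Qed.

Lemma U_eq x : U x = c * (N x - 1) / N x.
Proof.
  assert (Hx := N_gt_1 x).
  replace (U x) with ((N x * c - N x * (c - U x)) / N x) by (field; lra).
  rewrite mass_integral. field. lra.
Qed.

Lemma F_eq_Phi x : F x = Phi sigma (c ^ 2) (N x - 1).
Proof.
  assert (Hx := N_gt_1 x). assert (H := momentum_integral x). rewrite U_eq in H.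
  unfold Phi. replace (1 + (N x - 1)) with (N x) by ring.
  replace (F x) with (c * (c * (N x - 1) / N x) - (c * (N x - 1) / N x) ^ 2 / 2 - sigma * ln (N x))
    by lra.
  field. lra.
Qed.

Lemma energy_eq_G x : eps * Derive F x ^ 2 / 2 = G sigma (c ^ 2) (N x - 1).
Proof.
  assert (Hx := N_gt_1 x).
  rewrite energy_integral. unfold G. rewrite <- F_eq_Phi, U_eq.
  replace (1 + (N x - 1)) with (N x) by ring. field. lra.
Qed.

Lemma poisson_eq x : eps * Derive (Derive F) x = exp (F x) - 1 - (N x - 1).
Proof.
  destruct (system x) as [_ [_ E3]].
  change (Derive_n F 2 x) with (Derive (Derive F) x) in E3. lra.
Qed.

Lemma poisson_scaled x :
  Derive (Derive F) x / eps
    - (2 * Vspeed sigma * gamma * (F x / eps) - Vspeed sigma ^ 2 * (F x / eps) ^ 2)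
  = (exp (F x) - 1 - (N x - 1) - 2 * Vspeed sigma * gamma * eps * F x + Vspeed sigma ^ 2 * F x ^ 2)
    / eps ^ 2.
Proof. rewrite <- poisson_eq. field. lra. Qed.

Lemma G_at_amplitude : G sigma (c ^ 2) (N 0 - 1) = 0.
Proof.
  rewrite <- energy_eq_G, (even_Derive_0 F F_even (smooth_ex_derive F F_smooth 0)). field.
Qed.

Lemma G_nonneg_below_amplitude y : 0 < y < N 0 - 1 -> 0 <= G sigma (c ^ 2) y.
Proof.
  intros Hy.
  destruct (is_lim_p_infty_eps N 1 y N_lim ltac:(lra)) as [M HM].
  set (T := Rmax M 0 + 1).
  specialize (HM T ltac:(unfold T; generalize (Rmax_l M 0); lra)). apply Rabs_def2 in HM.
  destruct (IVT_gen_consistent N 0 T (y + 1)) as [x [_ Hx]].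
  - apply smooth_continuous, N_smooth.
  - rewrite Rmin_right, Rmax_left by lra. lra.
  - replace y with (N x - 1) by lra. rewrite <- energy_eq_G.
    assert (0 <= Derive F x ^ 2) by apply pow2_ge_0.
    apply Rmult_le_pos; [apply Rmult_le_pos|]; lra.
Qed.

End FirstIntegrals.

Lemma Vspeed_ge_1 sigma : 0 <= sigma -> 1 <= Vspeed sigma.
Proof. intros Hs. unfold Vspeed. rewrite <- sqrt_1 at 1. apply sqrt_le_1_alt. lra. Qed.

Lemma Vspeed_sq sigma : 0 <= sigma -> Vspeed sigma ^ 2 = 1 + sigma.
Proof. intros Hs. unfold Vspeed. rewrite pow2_sqrt; lra. Qed.

Definition KdV_amplitude (sigma gamma : R) : R := 3 * gamma / Vspeed sigma.

Definition KdV_rate (sigma gamma : R) : R := sqrt (Vspeed sigma * gamma / 2).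

Section KdVProfile.
Variables sigma gamma : R.
Hypotheses (sigma_ge0 : 0 <= sigma) (gamma_pos : 0 < gamma).

Local Notation V := (Vspeed sigma).
Local Notation k := (KdV_rate sigma gamma).
Local Notation A := (KdV_amplitude sigma gamma).
Local Notation two_cosh x := (exp (k * x) + exp (- (k * x))).

Definition n_KdV' (x : R) : R :=
  - 8 * A * k * (exp (k * x) - exp (- (k * x))) / two_cosh x ^ 3.

Let two_cosh_ge_2 x : 2 <= two_cosh x.
Proof.
  rewrite exp_Ropp. assert (HE := exp_pos (k * x)).
  assert (0 <= (exp (k * x) - 1) ^ 2 / exp (k * x)) by (apply Rdiv_le_0_compat; [apply pow2_ge_0 | lra]).
  replace (exp (k * x) + / exp (k * x)) with (2 + (exp (k * x) - 1) ^ 2 / exp (k * x)) by (field; lra).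
  lra.
Qed.

Lemma n_KdV_eq x : n_KdV sigma gamma x = 4 * A / two_cosh x ^ 2.
Proof.
  assert (H := two_cosh_ge_2 x). unfold n_KdV, sech, cosh, KdV_amplitude, KdV_rate in *.
  field. generalize (Vspeed_ge_1 sigma sigma_ge0). lra.
Qed.

Lemma is_derive_n_KdV x : is_derive (n_KdV sigma gamma) x (n_KdV' x).
Proof.
  apply is_derive_ext with (f := fun x => 4 * A / (exp (k * x) + exp (- (k * x))) ^ 2).
  { intros t. now rewrite n_KdV_eq. }
  assert (H := two_cosh_ge_2 x).
  auto_derive; [intro; nra|]. unfold n_KdV'. field. lra.
Qed.

Lemma is_derive_n_KdV' x :
  is_derive n_KdV' x (2 * V * gamma * n_KdV sigma gamma x - V ^ 2 * n_KdV sigma gamma x ^ 2).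
Proof.
  assert (H := two_cosh_ge_2 x). unfold n_KdV'.
  auto_derive; [repeat apply Rmult_integral_contrapositive_currified; lra|].
  rewrite n_KdV_eq. rewrite !exp_Ropp in *. set (E := exp (k * x)) in *.
  assert (HE : 0 < E) by apply exp_pos.
  assert (Hk : k * k = V * gamma / 2).
  { apply sqrt_sqrt. generalize (Vspeed_ge_1 sigma sigma_ge0). intros.
    apply Rmult_le_pos; [apply Rmult_le_pos|]; lra. }
  transitivity (16 * A * (k * k) / (E + / E) ^ 2 - 96 * A * (k * k) / (E + / E) ^ 4).
  - field. split; [lra | intro; nra].
  - rewrite Hk. unfold KdV_amplitude. generalize (Vspeed_ge_1 sigma sigma_ge0). intros.
    field. split; [lra | nra].
Qed.

Lemma n_KdV'_0 : n_KdV' 0 = 0.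
Proof. unfold n_KdV'. rewrite Rmult_0_r, Ropp_0. unfold Rdiv. ring. Qed.

Lemma n_KdV_0 : n_KdV sigma gamma 0 = A.
Proof. rewrite n_KdV_eq. rewrite Rmult_0_r, Ropp_0, exp_0. field. Qed.

Lemma KdV_amplitude_pos : 0 < A.
Proof. apply Rdiv_lt_0_compat; [|generalize (Vspeed_ge_1 sigma sigma_ge0)]; lra. Qed.

Lemma n_KdV_bounds x : 0 <= n_KdV sigma gamma x <= A.
Proof.
  rewrite n_KdV_eq. assert (H := two_cosh_ge_2 x).
  assert (HA := KdV_amplitude_pos).
  assert (4 <= two_cosh x ^ 2) by nra.
  split; [apply Rdiv_le_0_compat; nra|].
  apply Rle_div_l; nra.
Qed.

End KdVProfile.

Section AmplitudeEstimates.
Variables sigma gamma mA C : R.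
Hypotheses (sigma_ge0 : 0 <= sigma) (gamma_pos : 0 < gamma) (mA_pos : 0 < mA) (C_ge1 : 1 <= C).
Hypothesis expansions : expansion_bounds sigma mA C.

(* [d eps] is the excess of the squared speed over [1 + sigma] (see [speed_sq]), and
   [K eps] is twice the expected amplitude [3 gamma eps / V] of [n - 1]. *)
Local Notation V := (Vspeed sigma).
Local Notation d eps := (2 * V * gamma * eps + gamma ^ 2 * eps ^ 2).
Local Notation D := (2 * V * gamma + gamma ^ 2).
Local Notation K := (6 * gamma / V).
Local Notation T := (V * gamma * D + gamma ^ 2 + C * (D * K + K ^ 2)).

Let V_ge_1 : 1 <= V.
Proof. exact (Vspeed_ge_1 sigma sigma_ge0). Qed.

Lemma speed_sq eps : (V + gamma * eps) ^ 2 = 1 + sigma + d eps.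
Proof. rewrite <- (Vspeed_sq sigma sigma_ge0). ring. Qed.

Definition eps_max : R := Rmin (Rmin 1 (1 / D)) (Rmin (mA / K) (V * gamma / (T + 1))).

Lemma eps_max_pos : 0 < eps_max.
Proof.
  assert (0 < D) by nra. assert (0 < K) by (apply Rdiv_lt_0_compat; lra).
  assert (0 <= T).
  { apply Rplus_le_le_0_compat; [nra|]. apply Rmult_le_pos; [lra | nra]. }
  unfold eps_max. repeat apply Rmin_glb_lt; try lra; apply Rdiv_lt_0_compat; nra.
Qed.

Lemma eps_small eps : 0 < eps < eps_max ->
  0 <= d eps <= D * eps /\ D * eps <= 1 /\ K * eps <= mA /\ eps * (T + 1) < V * gamma.
Proof.
  intros [He Hmax]. unfold eps_max in Hmax.
  assert (H1 := Rmin_l (Rmin 1 (1 / D)) (Rmin (mA / K) (V * gamma / (T + 1)))).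
  assert (H2 := Rmin_r (Rmin 1 (1 / D)) (Rmin (mA / K) (V * gamma / (T + 1)))).
  assert (He1 := Rmin_l 1 (1 / D)). assert (HeD := Rmin_r 1 (1 / D)).
  assert (HeK := Rmin_l (mA / K) (V * gamma / (T + 1))).
  assert (HeT := Rmin_r (mA / K) (V * gamma / (T + 1))).
  assert (0 < D) by nra. assert (0 < K) by (apply Rdiv_lt_0_compat; lra).
  assert (0 <= T).
  { apply Rplus_le_le_0_compat; [nra|]. apply Rmult_le_pos; [lra | nra]. }
  assert (0 <= V * gamma * eps) by (apply Rmult_le_pos; [apply Rmult_le_pos|]; lra).
  assert (0 <= gamma ^ 2 * eps ^ 2) by (apply Rmult_le_pos; apply pow2_ge_0).
  assert (gamma ^ 2 * eps ^ 2 <= gamma ^ 2 * eps) by (apply Rmult_le_compat_l; [apply pow2_ge_0 | nra]).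
  repeat split.
  - lra.
  - lra.
  - rewrite Rmult_comm. apply Rle_div_r; lra.
  - rewrite Rmult_comm. apply Rle_div_r; lra.
  - apply Rlt_div_r; lra.
Qed.

Lemma d_half_expansion eps : 0 < eps < eps_max ->
  Rabs (d eps * (1 + d eps) / 2 - V * gamma * eps) <= (V * gamma * D + gamma ^ 2) * eps ^ 2.
Proof.
  intros He. destruct (eps_small eps He) as (Hd & HDe & _).
  replace (d eps * (1 + d eps) / 2 - V * gamma * eps)
    with (V * gamma * eps * d eps + gamma ^ 2 * eps ^ 2 * (1 + d eps) / 2) by field.
  assert (0 <= V * gamma * eps) by (apply Rmult_le_pos; [apply Rmult_le_pos|]; lra).
  assert (0 <= gamma ^ 2 * eps ^ 2) by (apply Rmult_le_pos; apply pow2_ge_0).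
  assert (0 <= V * gamma * eps * d eps) by (apply Rmult_le_pos; lra).
  assert (0 <= gamma ^ 2 * eps ^ 2 * (1 + d eps)) by (apply Rmult_le_pos; lra).
  rewrite Rabs_pos_eq by lra.
  assert (V * gamma * eps * d eps <= V * gamma * eps * (D * eps)) by (apply Rmult_le_compat_l; lra).
  nra.
Qed.

Lemma amplitude_le eps m0 : 0 < eps < eps_max -> 0 < m0 ->
  (forall y, 0 < y < m0 -> 0 <= G sigma ((V + gamma * eps) ^ 2) y) -> m0 <= K * eps.
Proof.
  intros He Hm0 HG. destruct (Rle_lt_dec m0 (K * eps)) as [|Hlt]; [assumption | exfalso].
  destruct (eps_small eps He) as (Hd & HDe & HKe & HTe).
  set (y := K * eps).
  assert (Hy : 0 < y) by (unfold y; apply Rmult_lt_0_compat; [apply Rdiv_lt_0_compat|]; lra).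
  specialize (HG y (conj Hy Hlt)). rewrite speed_sq in HG.
  destruct (expansions (d eps) y) as [HGy _]; [lra | split; [lra | exact HKe] |].
  apply Rabs_le_between in HGy.
  assert (Hy3 : (1 + sigma) * y / 3 = 2 * V * gamma * eps).
  { unfold y. rewrite <- (Vspeed_sq sigma sigma_ge0). field. lra. }
  assert (Hhalf := d_half_expansion eps He). apply Rabs_le_between in Hhalf.
  assert (HCy : C * (d eps * y + y ^ 2) <= C * (D * K + K ^ 2) * eps ^ 2).
  { replace (C * (D * K + K ^ 2) * eps ^ 2) with (C * ((D * eps) * y + y ^ 2)) by (unfold y; ring).
    apply Rmult_le_compat_l; [lra|]. apply Rplus_le_compat_r, Rmult_le_compat_r; lra. }
  (* at [y = K eps] the cubic term of [G] beats the quadratic one, so [G y < 0] *)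
  assert (Hneg : d eps * (1 + d eps) / 2 - (1 + sigma) * y / 3 + C * (d eps * y + y ^ 2) < 0).
  { rewrite Hy3. assert (eps * eps * (T + 1) < V * gamma * eps) by nra. nra. }
  assert (0 < y ^ 2) by (apply pow_lt; lra).
  assert (y ^ 2 * (d eps * (1 + d eps) / 2 - (1 + sigma) * y / 3 + C * (d eps * y + y ^ 2)) < 0) by nra.
  assert (C * (d eps * y ^ 3 + y ^ 4) = y ^ 2 * (C * (d eps * y + y ^ 2))) by ring.
  nra.
Qed.

Lemma amplitude_expansion eps m0 : 0 < eps < eps_max -> 0 < m0 <= K * eps ->
  G sigma ((V + gamma * eps) ^ 2) m0 = 0 ->
  Rabs (m0 - 3 * gamma * eps / V)
    <= 3 / V ^ 2 * (C * (D * K + K ^ 2) + V * gamma * D + gamma ^ 2) * eps ^ 2.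
Proof.
  intros He Hm0 HG. destruct (eps_small eps He) as (Hd & HDe & HKe & _).
  rewrite speed_sq in HG.
  destruct (expansions (d eps) m0) as [HGm _]; [lra | lra |].
  rewrite HG, Rminus_0_l, Rabs_Ropp, Rabs_mult, Rabs_pos_eq in HGm by nra.
  assert (Hm02 : 0 < m0 ^ 2) by (apply pow_lt; lra).
  assert (Hcub : Rabs (d eps * (1 + d eps) / 2 - (1 + sigma) * m0 / 3) <= C * (D * K + K ^ 2) * eps ^ 2).
  { apply Rmult_le_reg_l with (m0 ^ 2); [exact Hm02|].
    apply Rle_trans with (1 := HGm).
    replace (m0 ^ 2 * (C * (D * K + K ^ 2) * eps ^ 2))
      with (C * (m0 ^ 2 * ((D * eps) * (K * eps) + (K * eps) ^ 2))) by ring.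
    apply Rmult_le_compat_l; [lra|].
    assert (d eps * m0 <= (D * eps) * (K * eps)) by (apply Rmult_le_compat; lra).
    assert (m0 ^ 2 <= (K * eps) ^ 2) by (apply pow_incr; lra).
    nra. }
  assert (Hhalf := d_half_expansion eps He).
  assert (HV2 : 0 < V ^ 2) by (apply pow_lt; lra).
  replace (m0 - 3 * gamma * eps / V) with (3 / V ^ 2 * ((d eps * (1 + d eps) / 2 - V * gamma * eps)
                                         - (d eps * (1 + d eps) / 2 - (1 + sigma) * m0 / 3)))
    by (rewrite <- (Vspeed_sq sigma sigma_ge0); field; lra).
  rewrite Rabs_mult, (Rabs_pos_eq (3 / V ^ 2)) by (apply Rdiv_le_0_compat; lra).
  replace (3 / V ^ 2 * (C * (D * K + K ^ 2) + V * gamma * D + gamma ^ 2) * eps ^ 2)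
    with (3 / V ^ 2 * ((V * gamma * D + gamma ^ 2) * eps ^ 2 + C * (D * K + K ^ 2) * eps ^ 2)) by ring.
  apply Rmult_le_compat_l; [apply Rdiv_le_0_compat; lra|].
  eapply Rle_trans; [apply Rabs_triang | rewrite Rabs_Ropp; lra].
Qed.

Definition amplitude_const : R :=
  3 / V ^ 2 * (C * (D * K + K ^ 2) + V * gamma * D + gamma ^ 2) + C * (K * D + K ^ 2).

Lemma Phi_amplitude_expansion eps m0 : 0 < eps < eps_max -> 0 < m0 <= K * eps ->
  G sigma ((V + gamma * eps) ^ 2) m0 = 0 ->
  Rabs (Phi sigma ((V + gamma * eps) ^ 2) m0 / eps - KdV_amplitude sigma gamma)
    <= amplitude_const * eps.
Proof.
  intros He Hm0 HG. unfold amplitude_const. destruct (eps_small eps He) as (Hd & HDe & HKe & _).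
  assert (Hm := amplitude_expansion eps m0 He Hm0 HG).
  rewrite speed_sq in *.
  destruct (expansions (d eps) m0) as (_ & _ & HPhi & _); [lra | lra |].
  assert (HPhi' : Rabs (Phi sigma (1 + sigma + d eps) m0 - m0) <= C * (K * D + K ^ 2) * eps ^ 2).
  { apply Rle_trans with (1 := HPhi).
    replace (C * (K * D + K ^ 2) * eps ^ 2) with (C * ((K * eps) * (D * eps) + (K * eps) ^ 2)) by ring.
    apply Rmult_le_compat_l; [lra|].
    assert (m0 * d eps <= (K * eps) * (D * eps)) by (apply Rmult_le_compat; lra).
    assert (m0 ^ 2 <= (K * eps) ^ 2) by (apply pow_incr; lra).
    lra. }
  unfold KdV_amplitude.
  replace (Phi sigma (1 + sigma + d eps) m0 / eps - 3 * gamma / V)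
    with (((Phi sigma (1 + sigma + d eps) m0 - m0) + (m0 - 3 * gamma * eps / V)) / eps) by (field; lra).
  rewrite Rabs_div, (Rabs_pos_eq eps) by lra.
  apply Rle_div_l; [lra|].
  eapply Rle_trans; [apply Rabs_triang | nra].
Qed.

Definition residual_const : R := C * (K ^ 3 + D * K ^ 2 + D ^ 2 * K) + gamma ^ 2 * C * K.

Lemma residual_bound eps m : 0 < eps < eps_max -> 0 <= m <= K * eps ->
  let P := Phi sigma ((V + gamma * eps) ^ 2) m in
  Rabs (exp P - 1 - m - 2 * V * gamma * eps * P + V ^ 2 * P ^ 2) <= residual_const * eps ^ 3.
Proof.
  intros He Hm P. unfold residual_const. destruct (eps_small eps He) as (Hd & HDe & HKe & _).
  unfold P. rewrite speed_sq, (Vspeed_sq sigma sigma_ge0).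
  destruct (expansions (d eps) m) as (_ & HE & _ & HP); [lra | lra |].
  set (Q := Phi sigma (1 + sigma + d eps) m) in *.
  replace (exp Q - 1 - m - 2 * V * gamma * eps * Q + (1 + sigma) * Q ^ 2)
    with ((exp Q - 1 - m - d eps * Q + (1 + sigma) * Q ^ 2) + gamma ^ 2 * eps ^ 2 * Q) by ring.
  eapply Rle_trans; [apply Rabs_triang|].
  rewrite Rabs_mult, (Rabs_pos_eq (gamma ^ 2 * eps ^ 2)) by (apply Rmult_le_pos; apply pow2_ge_0).
  assert (H1 : C * (m ^ 3 + d eps * m ^ 2 + d eps ^ 2 * m)
                <= C * (K ^ 3 + D * K ^ 2 + D ^ 2 * K) * eps ^ 3).
  { replace (C * (K ^ 3 + D * K ^ 2 + D ^ 2 * K) * eps ^ 3)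
      with (C * ((K * eps) ^ 3 + (D * eps) * (K * eps) ^ 2 + (D * eps) ^ 2 * (K * eps))) by ring.
    apply Rmult_le_compat_l; [lra|].
    assert (m ^ 3 <= (K * eps) ^ 3) by (apply pow_incr; lra).
    assert (m ^ 2 <= (K * eps) ^ 2) by (apply pow_incr; lra).
    assert (d eps ^ 2 <= (D * eps) ^ 2) by (apply pow_incr; lra).
    assert (d eps * m ^ 2 <= (D * eps) * (K * eps) ^ 2)
      by (apply Rmult_le_compat; try lra; apply pow2_ge_0).
    assert (d eps ^ 2 * m <= (D * eps) ^ 2 * (K * eps))
      by (apply Rmult_le_compat; try lra; apply pow2_ge_0).
    lra. }
  assert (H2 : gamma ^ 2 * eps ^ 2 * Rabs Q <= gamma ^ 2 * C * K * eps ^ 3).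
  { replace (gamma ^ 2 * C * K * eps ^ 3) with (gamma ^ 2 * eps ^ 2 * (C * (K * eps))) by ring.
    apply Rmult_le_compat_l; [apply Rmult_le_pos; apply pow2_ge_0|].
    apply Rle_trans with (1 := HP). apply Rmult_le_compat_l; lra. }
  lra.
Qed.

Lemma Phi_small eps m : 0 < eps < eps_max -> 0 <= m <= K * eps ->
  Rabs (Phi sigma ((V + gamma * eps) ^ 2) m) <= C * K * eps.
Proof.
  intros He Hm. destruct (eps_small eps He) as (Hd & HDe & HKe & _).
  rewrite speed_sq. destruct (expansions (d eps) m) as (_ & _ & _ & HP); [lra | lra |].
  apply Rle_trans with (1 := HP). rewrite Rmult_assoc. apply Rmult_le_compat_l; lra.
Qed.

End AmplitudeEstimates.

Definition KdV_scaled_bounds (sigma gamma eps C0 CB B : R) (F : R -> R) : Prop :=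
  Rabs (F 0 / eps - KdV_amplitude sigma gamma) <= C0 * eps /\
  (forall x, Rabs (F x / eps) <= B) /\
  (forall x, Rabs (Derive (Derive F) x / eps
                   - (2 * Vspeed sigma * gamma * (F x / eps) - Vspeed sigma ^ 2 * (F x / eps) ^ 2))
             <= CB * eps).

Lemma scaled_wave_estimates sigma gamma : 0 <= sigma -> 0 < gamma ->
  exists e2 C0 CB B, 0 < e2 /\
  forall eps N U F, 0 < eps < e2 -> solitary_wave sigma gamma eps N U F ->
    KdV_scaled_bounds sigma gamma eps C0 CB B F.
Proof.
  intros Hs Hg.
  destruct (Phi_G_expansions sigma) as (mA & C & HmA & HC & Hexp).
  exists (eps_max sigma gamma mA C), (amplitude_const sigma gamma C), (residual_const sigma gamma C),
    (C * (6 * gamma / Vspeed sigma)).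
  split; [apply eps_max_pos; lra|].
  intros eps N U F He Hsw.
  assert (Heps : 0 < eps) by lra.
  assert (Hm0 : 0 < N 0 - 1) by (generalize (N_gt_1 _ _ _ _ _ _ Hsw 0); lra).
  assert (HmK0 := amplitude_le sigma gamma mA C Hs Hg HC Hexp eps (N 0 - 1) He Hm0
                    (G_nonneg_below_amplitude _ _ _ _ _ _ Heps Hsw)).
  assert (HmK : forall x, 0 <= N x - 1 <= 6 * gamma / Vspeed sigma * eps).
  { intros x. generalize (N_gt_1 _ _ _ _ _ _ Hsw x) (N_le_N0 _ _ _ _ _ _ Hsw x). lra. }
  split; [|split]; [|intros x..];
    rewrite ?(poisson_scaled _ _ _ _ _ _ Heps Hsw), !(F_eq_Phi _ _ _ _ _ _ Hsw).
  - exact (Phi_amplitude_expansion sigma gamma mA C Hs Hg HC Hexp eps _ He (conj Hm0 HmK0)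
             (G_at_amplitude _ _ _ _ _ _ Hsw)).
  - rewrite Rabs_div, (Rabs_pos_eq eps) by lra. apply Rle_div_l; [lra|].
    exact (Phi_small sigma gamma mA C Hs Hg HC Hexp eps _ He (HmK x)).
  - rewrite Rabs_div, (Rabs_pos_eq (eps ^ 2)) by (try apply pow_nonzero; try apply pow2_ge_0; lra).
    apply Rle_div_l; [apply pow_lt; lra|].
    replace (residual_const sigma gamma C * eps * eps ^ 2) with (residual_const sigma gamma C * eps ^ 3)
      by ring.
    exact (residual_bound sigma gamma mA C Hs Hg HC Hexp eps _ He (HmK x)).
Qed.

Definition KdV_comparison_rate (sigma gamma B : R) : R :=
  2 + (2 * Vspeed sigma * gamma + 2 * Vspeed sigma ^ 2 * (B + KdV_amplitude sigma gamma)).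

Lemma KdV_comparison_rate_ge_2 sigma gamma B : 0 <= sigma -> 0 < gamma -> 0 <= B ->
  2 <= KdV_comparison_rate sigma gamma B.
Proof.
  intros Hs Hg HB. unfold KdV_comparison_rate.
  generalize (Vspeed_ge_1 sigma Hs) (KdV_amplitude_pos sigma gamma Hs Hg). intros.
  assert (0 <= Vspeed sigma ^ 2 * (B + KdV_amplitude sigma gamma))
    by (apply Rmult_le_pos; [apply pow2_ge_0 | lra]).
  nra.
Qed.

Section ScaledDifference.
Variables (sigma gamma eps C0 CB B : R) (N U F : R -> R).
Hypotheses (sigma_ge0 : 0 <= sigma) (gamma_pos : 0 < gamma) (eps_pos : 0 < eps).
Hypothesis wave : solitary_wave sigma gamma eps N U F.
Hypothesis bounds : KdV_scaled_bounds sigma gamma eps C0 CB B F.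

Let F_smooth : smooth F. Proof. apply wave. Qed.

Let B_ge0 : 0 <= B.
Proof.
  destruct bounds as (_ & HB & _).
  apply Rle_trans with (Rabs (F 0 / eps)); [apply Rabs_pos | apply HB].
Qed.

Let rate_ge_2 : 2 <= KdV_comparison_rate sigma gamma B.
Proof. exact (KdV_comparison_rate_ge_2 sigma gamma B sigma_ge0 gamma_pos B_ge0). Qed.

Lemma scaled_difference_estimate xi : 0 <= xi ->
  let M := KdV_comparison_rate sigma gamma B in
  (F xi / eps - n_KdV sigma gamma xi) ^ 2 + (Derive F xi / eps - n_KdV' sigma gamma xi) ^ 2
    <= (C0 ^ 2 + CB ^ 2 / M) * eps ^ 2 * exp (M * xi).
Proof.
  intros Hxi M. destruct bounds as (H0 & HB & Hres).
  assert (HnB := n_KdV_bounds sigma gamma sigma_ge0 gamma_pos).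
  assert (HM := rate_ge_2). fold M in HM.
  assert (HW := KdV_comparison (2 * Vspeed sigma * gamma) (Vspeed sigma ^ 2)
    (B + KdV_amplitude sigma gamma) (CB * eps) (fun x => F x / eps) (fun x => Derive F x / eps)
    (fun x => Derive (Derive F) x / eps) (n_KdV sigma gamma) (n_KdV' sigma gamma)
    ltac:(generalize (Vspeed_ge_1 sigma sigma_ge0); nra) ltac:(apply pow2_ge_0)
    (fun x => is_derive_div_const _ eps x _ (Derive_correct _ _ (smooth_ex_derive F F_smooth x)))
    (fun x => is_derive_div_const _ eps x _ (Derive_correct _ _ (smooth_ex_derive2 F F_smooth x)))
    (is_derive_n_KdV sigma gamma sigma_ge0) (is_derive_n_KdV' sigma gamma sigma_ge0 gamma_pos) Hres
    ltac:(intros x; generalize (HB x) (HnB x); lra)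
    ltac:(intros x; rewrite Rabs_pos_eq; generalize (HnB x); lra) xi Hxi).
  cbv beta zeta in HW. fold M in HW.
  assert (HF0 : Derive F 0 = 0) by (apply even_Derive_0, smooth_ex_derive, F_smooth; apply wave).
  rewrite HF0, n_KdV'_0, n_KdV_0 in HW by assumption.
  assert (H0sq : (F 0 / eps - KdV_amplitude sigma gamma) ^ 2 <= C0 ^ 2 * eps ^ 2).
  { rewrite <- pow2_abs, <- Rpow_mult_distr. apply pow_incr. split; [apply Rabs_pos | exact H0]. }
  apply Rle_trans with (1 := HW).
  replace ((C0 ^ 2 + CB ^ 2 / M) * eps ^ 2)
    with (C0 ^ 2 * eps ^ 2 + (0 / eps - 0) ^ 2 + (CB * eps) ^ 2 / M) by (field; lra).
  apply Rmult_le_compat_r; [apply Rlt_le, exp_pos|]. unfold M, KdV_comparison_rate. lra.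
Qed.

Lemma remainder_scaling xi :
  F xi - eps * n_KdV sigma gamma xi = eps * (F xi / eps - n_KdV sigma gamma xi) /\
  Derive (fun x => F x - eps * n_KdV sigma gamma x) xi
    = eps * (Derive F xi / eps - n_KdV' sigma gamma xi).
Proof.
  split; [field; lra|].
  apply is_derive_unique.
  replace (eps * (Derive F xi / eps - n_KdV' sigma gamma xi))
    with (Derive F xi - eps * n_KdV' sigma gamma xi) by (field; lra).
  exact (is_derive_minus _ _ xi _ _ (Derive_correct _ _ (smooth_ex_derive F F_smooth xi))
           (is_derive_scal _ xi eps _ (is_derive_n_KdV sigma gamma sigma_ge0 xi))).
Qed.

Lemma KdV_remainder_estimate xi xistar : 0 <= xi <= xistar ->
  let M := KdV_comparison_rate sigma gamma B in
  let phiR := fun x => F x - eps * n_KdV sigma gamma x in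
  Derive phiR xi ^ 2 + phiR xi ^ 2 <= (C0 ^ 2 + CB ^ 2 / M) * exp (M * xistar) * eps ^ 4.
Proof.
  intros Hxi M phiR. unfold phiR. cbv beta. destruct (remainder_scaling xi) as [-> ->].
  assert (HW := scaled_difference_estimate xi (proj1 Hxi)). fold M in HW.
  assert (HM := rate_ge_2). fold M in HM.
  assert (HQ : 0 <= (C0 ^ 2 + CB ^ 2 / M) * eps ^ 2).
  { apply Rmult_le_pos; [|apply pow2_ge_0].
    apply Rplus_le_le_0_compat; [apply pow2_ge_0 | apply Rdiv_le_0_compat; [apply pow2_ge_0 | lra]]. }
  assert (Hexp : exp (M * xi) <= exp (M * xistar)).
  { destruct (Rle_lt_or_eq_dec xi xistar (proj2 Hxi)) as [Hlt | ->]; [|lra].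
    left. apply exp_increasing, Rmult_lt_compat_l; lra. }
  apply Rle_trans with (eps ^ 2 * ((C0 ^ 2 + CB ^ 2 / M) * eps ^ 2 * exp (M * xistar)));
    [|right; ring].
  replace ((eps * _) ^ 2 + (eps * _) ^ 2)
    with (eps ^ 2 * ((F xi / eps - n_KdV sigma gamma xi) ^ 2
                     + (Derive F xi / eps - n_KdV' sigma gamma xi) ^ 2)) by ring.
  apply Rmult_le_compat_l; [apply pow2_ge_0|].
  apply Rle_trans with (1 := HW). now apply Rmult_le_compat_l.
Qed.

End ScaledDifference.

Theorem proposition4p5 (sigma gamma : R) (hsigma : 0 <= sigma) (hgamma : 0 < gamma)
  (eps0 : R) (heps0 : 0 < eps0)
  (n u phi : R -> R -> R)
  (hsol : forall eps, 0 < eps -> eps < eps0 ->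
            solitary_wave sigma gamma eps (n eps) (u eps) (phi eps)) :
  exists eps1 : R, 0 < eps1 /\
    forall xistar : R, 0 < xistar ->
      exists C : R, 0 < C /\
        forall eps : R, 0 < eps -> eps < eps1 ->
          forall xi : R, 0 <= xi <= xistar ->
            let phiR := fun x => phi eps x - eps * n_KdV sigma gamma x in
            (Derive phiR xi) ^ 2 + (phiR xi) ^ 2 <= C * eps ^ 4.
Proof.
  destruct (scaled_wave_estimates sigma gamma hsigma hgamma) as (e2 & C0 & CB & B & He2 & Hest).
  exists (Rmin e2 eps0). split; [now apply Rmin_glb_lt|].
  intros xistar _.
  set (M := KdV_comparison_rate sigma gamma B).
  set (Q := (C0 ^ 2 + CB ^ 2 / M) * exp (M * xistar)).
  exists (Rabs Q + 1). split; [generalize (Rabs_pos Q); lra|].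
  intros eps He Heps xi Hxi phiR.
  assert (Hw := hsol eps He (Rlt_le_trans _ _ _ Heps (Rmin_r _ _))).
  assert (Hb := Hest eps _ _ _ (conj He (Rlt_le_trans _ _ _ Heps (Rmin_l _ _))) Hw).
  apply Rle_trans with (Q * eps ^ 4).
  - exact (KdV_remainder_estimate sigma gamma eps C0 CB B _ _ _ hsigma hgamma He Hw Hb xi xistar Hxi).
  - apply Rmult_le_compat_r; [apply pow_le; lra|]. generalize (Rle_abs Q). lra.
Qed.
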